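(* Let $G_{K,N}$ be the graph with vertex set $\{u_{ij},b_{ij}: i\in[K], j\in[N]\}$ whose edges are exactly: $u_{ij}\sim u_{ik}$ for $j\ne k$; $b_{ij}\sim u_{ik}$ for all $j,k\in[N]$; and for each $i\in[N]$ and $j\ne k$ in $[K]$: $u_{ji}\sim u_{ki}$, $b_{ji}\sim b_{ki}$, $b_{ji}\sim u_{ki}$. For $i\in[K]$ let $U_i=\{u_{ij}:j\in[N]\}$ and $B_i=\{b_{ij}:j\in[N]\}$. Then for every $i\in[K]$, the induced subgraph $G_{K,N}\big((\bigcup_{j\in[K]}B_j)\cup U_i\big)$ is perfect.
   Context: A graph is perfect if in every induced subgraph the clique number equals the chromatic number. *)

From mathcomp Require Import all_boot.
Set Implicit Arguments. Unset Strict Implicit. Unset Printing Implicit Defensive.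

Section Graphs.
Variable T : finType.
Variable e : rel T.

Definition clique (C : {set T}) : bool :=
  [forall x in C, forall y in C, (x != y) ==> e x y].

Definition clique_number (A : {set T}) : nat :=
  \max_(C : {set T} | (C \subset A) && clique C) #|C|.

(* A is properly colourable with colours in {0,..,k-1}
   (colour values are drawn from 'I_(#|T|.+1), which suffices for all k). *)
Definition colorable (A : {set T}) (k : nat) : bool :=
  [exists f : {ffun T -> 'I_(#|T|.+1)},
     [forall x in A, f x < k] &&
     [forall x in A, forall y in A, ((x != y) && e x y) ==> (f x != f y)]].

Lemma colorable_ex (A : {set T}) : exists k, colorable A k.
Proof.
exists #|T|; apply/existsP.
exists [ffun x => inord (enum_rank x)]; apply/andP; split.
  apply/forall_inP => x _; rewrite ffunE inordK ?ltn_ord //.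
  by rewrite ltnS ltnW.
apply/forall_inP => x _; apply/forall_inP => y _; apply/implyP => /andP [nxy _].
rewrite !ffunE; apply: contra nxy => /eqP /(congr1 val).
have H (z : T) : enum_rank z < #|T|.+1.
  by rewrite ltnS; apply: ltnW; apply: ltn_ord.
rewrite /= !inordK // => /val_inj /enum_rank_inj ->; exact: eqxx.
Qed.

Definition chromatic_number (A : {set T}) : nat := ex_minn (colorable_ex A).

Definition perfect (S : {set T}) : Prop :=
  forall A : {set T}, A \subset S -> clique_number A = chromatic_number A.
End Graphs.

(* The graph G_{K,N}: vertex (true, i, j) is u_{ij}, (false, i, j) is b_{ij}. *)
Definition GV (K N : nat) : finType := (bool * 'I_K * 'I_N)%type.

Definition is_u {K N} (v : GV K N) : bool := v.1.1.
Definition row {K N} (v : GV K N) : 'I_K := v.1.2.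
Definition col {K N} (v : GV K N) : 'I_N := v.2.

Definition Gedge (K N : nat) : rel (GV K N) := fun v w =>
  [||
      [&& is_u v, is_u w, row v == row w & col v != col w],
      (* b_{ij} ~ u_{ik} for all j, k (both orientations) *)
      [&& row v == row w & is_u v != is_u w]
    | (* same column, different rows: u-u, b-b, b-u *)
      (col v == col w) && (row v != row w)].

Definition Uset (K N : nat) (i : 'I_K) : {set GV K N} :=
  [set v | is_u v && (row v == i)].
Definition Ball (K N : nat) : {set GV K N} := [set v | ~~ is_u v].

From mathcomp Require Import all_boot zify.
Set Implicit Arguments. Unset Strict Implicit. Unset Printing Implicit Defensive.

(* Let A be a set of b-vertices and of vertices of U_i, and w its clique
   number.  The u-vertices of A lie in U_i and form a clique; give them the
   colors 0, ..., m-1.  A vertex b_{ic} is adjacent to all of U_i, so if one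
   lies in A then m < w and all of them can get color m.  The remaining
   vertices b_{jc} (j <> i) only see vertices of their own column c, and that
   column is a clique of A: there are at most w of them together with u_{ic}
   and b_{ic}, so they can be given distinct colors below w avoiding those of
   u_{ic} and b_{ic}.  Hence A is w-colorable, and chi(A) = w. *)

Section CliqueColoring.
Variables (T : finType) (e : rel T).

Lemma card_le_clique_number (A C : {set T}) :
  C \subset A -> clique e C -> #|C| <= clique_number e A.
Proof. by move=> sCA cC; apply: leq_bigmax_cond; rewrite sCA cC. Qed.

Lemma clique_number_le_card (A : {set T}) : clique_number e A <= #|T|.
Proof. by apply/bigmax_leqP => C _; apply: max_card. Qed.

Lemma clique_number_le_colorable (A : {set T}) k :
  colorable e A k -> clique_number e A <= k.
Proof.
case/existsP => f /andP [/forall_inP f_lt /forall_inP f_proper].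
apply/bigmax_leqP => C /andP [/subsetP sCA /forall_inP cC].
have f_inj : {in C &, injective f}.
  move=> x y xC yC fxy; apply/eqP; apply/negPn/negP => nxy.
  move/forall_inP: (cC x xC) => /(_ y yC)/implyP/(_ nxy) exy.
  move/forall_inP: (f_proper x (sCA x xC)) => /(_ y (sCA y yC))/implyP.
  by rewrite nxy exy fxy eqxx => /(_ isT).
rewrite -(card_in_imset f_inj) cardE -(size_map val) -(size_iota 0 k).
apply: uniq_leq_size; first by rewrite map_inj_uniq ?enum_uniq //; apply: val_inj.
move=> n /mapP [c]; rewrite mem_enum => /imsetP [x xC ->] ->.
by rewrite mem_iota /=; apply: f_lt; apply: sCA.
Qed.

Lemma colorable_nat_coloring (A : {set T}) k (f : T -> nat) :
  k <= #|T| -> {in A, forall x, f x < k} ->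
  {in A &, forall x y, x != y -> e x y -> f x != f y} -> colorable e A k.
Proof.
move=> k_le f_lt f_proper.
have f_small x : x \in A -> f x < #|T|.+1 by move/f_lt/leq_trans; apply; apply: leqW.
apply/existsP; exists [ffun x => inord (f x)]; apply/andP; split.
  by apply/forall_inP => x xA; rewrite ffunE inordK ?f_small ?f_lt.
apply/forall_inP => x xA; apply/forall_inP => y yA; apply/implyP => /andP [nxy exy].
rewrite !ffunE; apply: contra (f_proper x y xA yA nxy exy) => /eqP /(congr1 val).
by rewrite /= !inordK ?f_small // => ->.
Qed.

Lemma chromatic_number_eq_clique_number (A : {set T}) :
  colorable e A (clique_number e A) -> chromatic_number e A = clique_number e A.
Proof.
move=> colA; rewrite /chromatic_number; case: ex_minnP => n colAn n_min.
by apply/eqP; rewrite eqn_leq n_min // clique_number_le_colorable.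
Qed.

End CliqueColoring.

Lemma index_enum_lt (T : finType) (S : {set T}) x :
  x \in S -> index x (enum S) < #|S|.
Proof. by rewrite cardE index_mem mem_enum. Qed.

Lemma index_enum_inj (T : finType) (S : {set T}) :
  {in S &, injective (index ^~ (enum S))}.
Proof. by move=> x y xS yS; apply: index_inj; rewrite ?mem_enum. Qed.

Lemma size_iota_notin w (s : seq nat) :
  w - size s <= size [seq n <- iota 0 w | n \notin s].
Proof.
have count_s : count (mem s) (iota 0 w) <= size s.
  rewrite -size_filter; apply: uniq_leq_size; first exact/filter_uniq/iota_uniq.
  by move=> n; rewrite mem_filter => /andP [].
have := count_predC (mem s) (iota 0 w); rewrite size_iota size_filter.
by change (count (fun n => n \notin s) _) with (count (predC (mem s)) (iota 0 w)); lia.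
Qed.

Section GraphEdges.
Variables K N : nat.
Local Notation e := (@Gedge K N).

Lemma GV_eta (x : GV K N) : x = (is_u x, row x, col x).
Proof. by case: x => [[]]. Qed.

Lemma GedgeC : symmetric e.
Proof.
move=> [[a b] c] [[a' b'] c']; rewrite /Gedge /is_u /row /col /=.
by rewrite (eq_sym b) (eq_sym c) (eq_sym a); case: a; case: a'.
Qed.

Lemma Gedge_col (x y : GV K N) : x != y -> col x == col y -> e x y.
Proof.
move: x y => [[a b] c] [[a' b'] c'].
rewrite /Gedge /is_u /row /col /= !xpair_eqE => nxy /eqP ecc; subst c'.
rewrite eqxx /=; case: (eqVneq b b') => [ebb | _]; last by rewrite orbT.
by subst b'; rewrite !eqxx !andbT in nxy; rewrite nxy orbT.
Qed.

Lemma Gedge_uu (x y : GV K N) :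
  is_u x -> is_u y -> row x = row y -> x != y -> e x y.
Proof.
move: x y => [[a b] c] [[a' b'] c'].
by rewrite /Gedge /is_u /row /col /= !xpair_eqE => -> -> <-; rewrite !eqxx => ->.
Qed.

Lemma Gedge_ub (x y : GV K N) : row x = row y -> is_u x != is_u y -> e x y.
Proof. by rewrite /Gedge => -> ->; rewrite eqxx orbT. Qed.

End GraphEdges.

Section Coloring.
Variables (K N : nat) (i : 'I_K) (A : {set GV K N}).
Hypothesis sA : A \subset @Ball K N :|: @Uset K N i.

Local Notation e := (@Gedge K N).
Local Notation w := (clique_number e A).

Definition uA := [set x in A | is_u x].
Local Notation m := #|uA|.
Definition ui c : GV K N := (true, i, c).
Definition bi c : GV K N := (false, i, c).
Definition bcol c := [set x in A | [&& ~~ is_u x, col x == c & row x != i]].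

Definition reserved c :=
  (if ui c \in A then [:: index (ui c) (enum uA)] else [::]) ++
  (if bi c \in A then [:: m] else [::]).
Definition free c := [seq n <- iota 0 w | n \notin reserved c].

Definition color x :=
  if is_u x then index x (enum uA)
  else if row x == i then m
  else nth 0 (free (col x)) (index x (enum (bcol (col x)))).

Lemma row_u x : x \in A -> is_u x -> row x = i.
Proof. by move/(subsetP sA); rewrite !inE => /orP [/negbTE -> | /andP [_ /eqP]]. Qed.

Lemma ui_col x : is_u x -> row x = i -> x = ui (col x).
Proof. by move=> ux rx; rewrite [x]GV_eta ux rx. Qed.

Lemma bi_col x : ~~ is_u x -> row x = i -> x = bi (col x).
Proof. by move=> ux rx; rewrite [x]GV_eta (negbTE ux) rx. Qed.

Lemma uA_edge x y : x \in uA -> y \in uA -> x != y -> e x y.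
Proof.
rewrite !inE => /andP [xA ux] /andP [yA uy].
by apply: Gedge_uu; rewrite ?(row_u xA) ?(row_u yA).
Qed.

Lemma uA_clique : clique e uA.
Proof.
apply/forall_inP => x xu; apply/forall_inP => y yu.
by apply/implyP; apply: uA_edge.
Qed.

Lemma card_uA_le : m <= w.
Proof. by apply: card_le_clique_number uA_clique; rewrite /uA setIdE subsetIl. Qed.

Lemma card_uA_lt c : bi c \in A -> m < w.
Proof.
move=> bA; have notin_uA : bi c \notin uA by rewrite inE andbF.
suff : #|bi c |: uA| <= w by rewrite cardsU1 notin_uA add1n.
apply: card_le_clique_number.
  by rewrite subUset sub1set bA /uA setIdE subsetIl.
have edge_bu x : x \in uA -> e (bi c) x.
  by rewrite inE => /andP [xA ux]; apply: Gedge_ub; rewrite /= ?(row_u xA) ?ux.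
apply/forall_inP => x /setU1P hx; apply/forall_inP => y /setU1P hy.
apply/implyP; case: hx hy => [-> | xu] [-> | yu].
- by rewrite eqxx.
- by move=> _; apply: edge_bu.
- by move=> _; rewrite GedgeC; apply: edge_bu.
- exact: uA_edge.
Qed.

Lemma column_clique_card c : #|bcol c| + size (reserved c) <= w.
Proof.
pose Col := [set x in A | col x == c].
have Col_clique : clique e Col.
  apply/forall_inP => x; rewrite inE => /andP [_ /eqP cx].
  apply/forall_inP => y; rewrite inE => /andP [_ /eqP cy].
  by apply/implyP => nxy; apply: Gedge_col; rewrite // cx cy.
have sColA : Col \subset A by rewrite /Col setIdE subsetIl.
apply: leq_trans (card_le_clique_number sColA Col_clique).
rewrite [#|Col|](cardsD1 (ui c)) [#|Col :\ _|](cardsD1 (bi c)).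
rewrite !inE /= !eqxx !andbT size_cat.
have /subset_leq_card : bcol c \subset (Col :\ ui c) :\ bi c.
  apply/subsetP => x; rewrite !inE => /andP [xA /and3P [_ cx rx]].
  by rewrite xA cx !andbT; apply/andP; split; apply: contraNneq rx => ->.
by case: (ui c \in A); case: (bi c \in A) => /=; lia.
Qed.

Lemma bcol_index_lt c x :
  x \in bcol c -> index x (enum (bcol c)) < size (free c).
Proof.
move/index_enum_lt/leq_trans; apply; apply: leq_trans (size_iota_notin _ _).
by have := column_clique_card c; lia.
Qed.

Lemma color_bcol x : x \in A -> ~~ is_u x -> row x != i ->
  x \in bcol (col x) /\ color x \in free (col x).
Proof.
move=> xA ux rx; have xD : x \in bcol (col x) by rewrite inE xA ux rx eqxx.
by rewrite /color (negbTE ux) (negbTE rx); split; last apply/mem_nth/bcol_index_lt.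
Qed.

Lemma color_lt x : x \in A -> color x < w.
Proof.
move=> xA; rewrite /color; case ux: (is_u x).
  by apply: leq_trans card_uA_le; apply: index_enum_lt; rewrite inE xA ux.
case: ifP => [/eqP rx | rx].
  by apply: (@card_uA_lt (col x)); rewrite -bi_col ?ux.
have [_] := color_bcol xA (negbT ux) (negbT rx).
by rewrite /color ux rx mem_filter mem_iota => /andP [_ /andP []].
Qed.

Lemma color_notin_reserved x : x \in A -> ~~ is_u x -> row x != i ->
  color x \notin reserved (col x).
Proof.
by move=> xA ux rx; have [_] := color_bcol xA ux rx; rewrite mem_filter => /andP [].
Qed.

Lemma color_proper_ub x y : x \in A -> y \in A -> is_u x -> ~~ is_u y -> e x y ->
  color x != color y.
Proof.
move=> xA yA ux uy exy; have xuA : x \in uA by rewrite inE xA ux.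
have color_x : color x = index x (enum uA) by rewrite /color ux.
case: (boolP (row y == i)) => ry.
  by rewrite color_x /color (negbTE uy) ry neq_ltn index_enum_lt.
move: exy; rewrite /Gedge ux (negbTE uy) (row_u xA ux) (eq_sym i) (negbTE ry) /=.
rewrite andbT => /eqP cxy; have x_ui : x = ui (col y) by rewrite -cxy -ui_col ?row_u.
apply: contra (color_notin_reserved yA uy ry) => /eqP <-.
by rewrite /reserved -x_ui xA color_x mem_cat inE eqxx.
Qed.

Lemma color_proper_bb x y : x \in A -> y \in A -> ~~ is_u x -> ~~ is_u y ->
  x != y -> e x y -> color x != color y.
Proof.
wlog ry : x y / row y != i.
  move=> gen xA yA ux uy nxy exy; case: (boolP (row y == i)) => ry; last exact: gen.
  have rx : row x != i.
    by move: exy; rewrite /Gedge (negbTE ux) (negbTE uy) (eqP ry) /= andbF => /andP [].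
  by rewrite eq_sym gen // 1?eq_sym // GedgeC.
move=> xA yA ux uy nxy; rewrite /Gedge (negbTE ux) (negbTE uy) /= andbF /=.
case/andP => /eqP cxy rxy; case: (boolP (row x == i)) => rx.
  have x_bi : x = bi (col y) by rewrite -cxy -bi_col ?(eqP rx).
  apply: contra (color_notin_reserved yA uy ry) => /eqP <-.
  by rewrite /reserved -x_bi xA /color (negbTE ux) rx mem_cat !inE eqxx orbT.
have [xD _] := color_bcol xA ux rx; have [yD _] := color_bcol yA uy ry.
rewrite /color (negbTE ux) (negbTE uy) (negbTE rx) (negbTE ry) cxy.
rewrite cxy in xD; rewrite nth_uniq ?bcol_index_lt ?filter_uniq ?iota_uniq //.
by apply: contra nxy => /eqP /index_enum_inj ->.
Qed.

Lemma color_proper x y : x \in A -> y \in A -> x != y -> e x y ->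
  color x != color y.
Proof.
move=> xA yA nxy exy; case ux: (is_u x); case uy: (is_u y).
- have xu : x \in uA by rewrite inE xA ux.
  have yu : y \in uA by rewrite inE yA uy.
  by rewrite /color ux uy; apply: contra nxy => /eqP /index_enum_inj ->.
- by apply: color_proper_ub; rewrite ?uy.
- by rewrite eq_sym; apply: color_proper_ub; rewrite ?ux // GedgeC.
- by apply: color_proper_bb; rewrite ?ux ?uy.
Qed.

Lemma colorable_clique_number : colorable e A w.
Proof.
apply: (colorable_nat_coloring (f := color)) => //.
- exact: clique_number_le_card.
- by move=> x; apply: color_lt.
- by move=> x y; apply: color_proper.
Qed.

End Coloring.

Theorem lemma5 (K N : nat) (i : 'I_K) :
  perfect (@Gedge K N) (@Ball K N :|: @Uset K N i).
Proof.
move=> A sA; rewrite chromatic_number_eq_clique_number //.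
exact: colorable_clique_number sA.
Qed.
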